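(* Let $d\ge3$, $\gamma\in[1,2]$, $\rho_0>0$, and let $\rho$ be the Lane–Emden profile with central density $\rho_0$ on $[0,R_g)$. Then for all $r\in[0,R_g)$: if $\gamma\in[1,2)$, $\rho(r)\le\Big(\rho_0^{-(2-\gamma)}+\frac{2\pi}{d}\frac{2-\gamma}{\gamma}r^2\Big)^{-1/(2-\gamma)}$; if $\gamma=2$, $\rho(r)\le\exp\big(\ln\rho_0-\frac{2\pi}{d}\frac{1}{\gamma}r^2\big)=\rho_0e^{-\pi r^2/d}$. Equivalently, for $\gamma>1$ with $w=\rho^{\gamma-1}$, $w_0=\rho_0^{\gamma-1}$, $\alpha=1/(\gamma-1)$: $w(r)\le\big(w_0^{-(\alpha-1)}+\frac{2\pi}{d}\frac{2-\gamma}{\gamma}r^2\big)^{-1/(\alpha-1)}$ if $\alpha\ne1$ and $w(r)\le\exp\big(\ln w_0-\frac{2\pi}{d}\frac{\gamma-1}{\gamma}r^2\big)$ if $\alpha=1$; and for $\gamma=1$ with $h=\ln\rho$, $h_0=\ln\rho_0$: $h(r)\le-\ln\big(e^{-h_0}+\frac{2\pi}{d}r^2\big)$.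
   Context: Fix an integer $d\ge 3$ and $\gamma\in[1,2]$. For $\rho_0>0$, the (radial, gaseous) Lane–Emden profile with central density $\rho_0$ is the unique continuous function $\rho:[0,R_g)\to(0,\infty)$, defined on its maximal interval of existence $[0,R_g)$, $R_g\in(0,\infty]$, with $\rho(0)=\rho_0$ and, writing $m(r)=4\pi\int_0^r y^{d-1}\rho(y)\,dy$, $\frac{d}{dr}\big(\rho(r)^\gamma\big)=-\rho(r)\,m(r)/r^{d-1}$ for $0<r<R_g$ (equivalently: for $\gamma>1$, $w=\rho^{\gamma-1}$ satisfies $w'(r)=-4\pi\frac{\gamma-1}{\gamma}r^{1-d}\int_0^r y^{d-1}w(y)^{\alpha}dy$ with $\alpha=1/(\gamma-1)$; for $\gamma=1$, $h=\ln\rho$ satisfies $h'(r)=-4\pi r^{1-d}\int_0^r y^{d-1}e^{h(y)}dy$). *)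

From Stdlib Require Import Reals.
From Coquelicot Require Import Coquelicot.
Open Scope R_scope.

Definition LE_mass (d : nat) (rho : R -> R) (r : R) : R :=
  4 * PI * RInt (fun y => y ^ (d - 1) * rho y) 0 r.

Definition LE_solution (d : nat) (gamma rho0 : R) (Rg : Rbar) (rho : R -> R) : Prop :=
  Rbar_lt (Finite 0) Rg /\
  rho 0 = rho0 /\
  (forall r, 0 <= r -> Rbar_lt (Finite r) Rg -> 0 < rho r) /\
  filterlim rho (at_right 0) (locally (rho 0)) /\
  (forall r, 0 < r -> Rbar_lt (Finite r) Rg -> continuous rho r) /\
  (forall r, 0 < r -> Rbar_lt (Finite r) Rg ->
     is_derive (fun s => Rpower (rho s) gamma) r
               (- rho r * LE_mass d rho r / r ^ (d - 1))).

(* the Lane-Emden profile: a solution on its maximal interval of existence,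
   i.e. no solution with the same central density lives on a strictly larger
   interval [0, R') with R' > Rg. *)
Definition LE_profile (d : nat) (gamma rho0 : R) (Rg : Rbar) (rho : R -> R) : Prop :=
  LE_solution d gamma rho0 Rg rho /\
  ~ (exists (R' : Rbar) (rho' : R -> R),
        Rbar_lt Rg R' /\ LE_solution d gamma rho0 R' rho').

(* Since [rho ^ gamma] decreases, [rho] is nonincreasing, so the enclosed mass satisfies
   [m x >= 4 pi rho x x^d / d].  Writing the equation as
   [(- ln rho)' = rho ^ (2 - gamma) / gamma * m / (rho x^(d-1))], this lower bound makes
   [rho ^ (-(2 - gamma)) - 2 pi/d (2 - gamma)/gamma x^2] (for gamma < 2) and
   [- ln rho - 2 pi/(d gamma) x^2] (for gamma = 2) nondecreasing on [[0, Rg)];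
   comparing their values at [0] and [r] gives the two bounds. *)

From Stdlib Require Import Reals Lra Lia.
From Coquelicot Require Import Coquelicot.
Open Scope R_scope.

Lemma nondecreasing_of_is_derive_nonneg (F dF : R -> R) (a b : R) : a <= b ->
  (forall x, a <= x <= b -> continuous F x) ->
  (forall x, a < x < b -> is_derive F x (dF x)) ->
  (forall x, a < x < b -> 0 <= dF x) -> F a <= F b.
Proof.
  intros hab hc hd hpos.
  (* [MVT_gen] may return an endpoint, where [dF] is not controlled: use [Rmax 0 dF]. *)
  destruct (MVT_gen F a b (fun x => Rmax 0 (dF x))) as [c [_ hF]];
    rewrite ?Rmin_left, ?Rmax_right by lra.
  - intros x hx; rewrite Rmax_right by (apply hpos; lra); apply hd; lra.
  - intros x hx; apply continuity_pt_filterlim, hc; lra.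
  - assert (0 <= Rmax 0 (dF c) * (b - a)) by (apply Rmult_le_pos; [apply Rmax_l | lra]).
    lra.
Qed.

Lemma ln_le_cancel (x y : R) : 0 < x -> 0 < y -> ln x <= ln y -> x <= y.
Proof.
  intros hx hy hle; destruct (Rle_lt_dec x y) as [|hlt]; [easy|].
  pose proof (ln_increasing y x hy hlt); lra.
Qed.

Lemma le_Rpower_of_Rpower_opp_ge (x y k : R) : 0 < x -> 0 < y -> 0 < k ->
  y <= Rpower x (- k) -> x <= Rpower y (- (1 / k)).
Proof.
  intros hx hy hk hle; apply ln_le_cancel; [exact hx | apply exp_pos |].
  apply ln_le in hle; [|exact hy]; rewrite ln_Rpower in hle |- *.
  apply (Rmult_le_reg_l k); [exact hk|].
  replace (k * (- (1 / k) * ln y)) with (- ln y) by (field; lra); lra.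
Qed.

Lemma is_derive_ln_of_Rpower (f : R -> R) (a x D : R) : a <> 0 ->
  is_derive (fun s => Rpower (f s) a) x D ->
  is_derive (fun s => ln (f s)) x (D / (a * Rpower (f x) a)).
Proof.
  intros ha hD.
  apply (is_derive_ext (fun s => / a * ln (Rpower (f s) a))).
  { intros s; rewrite ln_Rpower, <- Rmult_assoc, Rinv_l, Rmult_1_l by exact ha; reflexivity. }
  replace (D / (a * Rpower (f x) a)) with (/ a * (D * / Rpower (f x) a))
    by (field; split; [apply Rgt_not_eq, exp_pos | exact ha]).
  apply is_derive_scal, (is_derive_comp ln (fun s => Rpower (f s) a)); [|exact hD].
  apply is_derive_ln, exp_pos.
Qed.

Section LaneEmdenSolution.

Variables (d : nat) (gamma : R) (Rg : Rbar) (rho : R -> R).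
Hypothesis d_pos : (1 <= d)%nat.
Hypothesis gamma_pos : 0 < gamma.
Hypothesis rho_pos : forall r, 0 <= r -> Rbar_lt r Rg -> 0 < rho r.
Hypothesis rho_right_cont_0 : filterlim rho (at_right 0) (locally (rho 0)).
Hypothesis rho_cont : forall r, 0 < r -> Rbar_lt r Rg -> continuous rho r.
Hypothesis rho_equation : forall r, 0 < r -> Rbar_lt r Rg ->
  is_derive (fun s => Rpower (rho s) gamma) r (- rho r * LE_mass d rho r / r ^ (d - 1)).

Lemma lt_Rg_of_le (r t : R) : Rbar_lt r Rg -> t <= r -> Rbar_lt t Rg.
Proof. intros hr htr; exact (Rbar_le_lt_trans t r Rg htr hr). Qed.

(* Freezing [rho] left of [0] turns its right-continuity at [0] into continuity, so that
   the mean value theorem applies on [[0, r]]. *)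
Lemma continuous_rho_Rmax (t : R) : Rbar_lt t Rg -> continuous (fun s => rho (Rmax 0 s)) t.
Proof.
  intros ht; destruct (Rtotal_order t 0) as [htneg|[->|htpos]].
  - apply (continuous_ext_loc _ (fun _ => rho 0)); [|apply continuous_const].
    apply (filter_imp (fun u => u < 0)); [|now apply open_lt].
    intros u hu; now rewrite Rmax_left by lra.
  - intros P [eps hP]; destruct (proj1 (filterlim_locally rho (rho 0)) rho_right_cont_0 eps)
      as [delta hdelta].
    exists delta; intros u hu; apply hP; rewrite (Rmax_left 0 0) by lra.
    destruct (Rle_dec u 0).
    + rewrite Rmax_left by lra; apply ball_center.
    + rewrite Rmax_right by lra; apply hdelta; [exact hu | lra].
  - apply (continuous_ext_loc _ rho); [|now apply rho_cont].
    apply (filter_imp (fun u => 0 < u)); [|now apply open_gt].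
    intros u hu; now rewrite Rmax_right by lra.
Qed.

Let mass_ratio (x : R) : R := LE_mass d rho x / (rho x * x ^ (d - 1)).

Lemma ex_RInt_mass_integrand (s : R) : 0 <= s -> Rbar_lt s Rg ->
  ex_RInt (fun y => y ^ (d - 1) * rho y) 0 s.
Proof.
  intros hs hsR; apply (ex_RInt_ext (fun y => y ^ (d - 1) * rho (Rmax 0 y))).
  { intros y hy; rewrite Rmin_left, Rmax_right in hy by lra.
    now rewrite (Rmax_right 0 y) by lra. }
  apply (ex_RInt_continuous (V := R_CompleteNormedModule)); intros y hy.
  rewrite Rmin_left, Rmax_right in hy by lra.
  apply (continuous_mult (fun y => y ^ (d - 1)) (fun y => rho (Rmax 0 y))).
  - apply (ex_derive_continuous (fun y : R => y ^ (d - 1))); auto_derive; easy.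
  - apply continuous_rho_Rmax, (lt_Rg_of_le s); [exact hsR | lra].
Qed.

Lemma LE_mass_nonneg (s : R) : 0 <= s -> Rbar_lt s Rg -> 0 <= LE_mass d rho s.
Proof.
  intros hs hsR; unfold LE_mass; pose proof PI_RGT_0.
  apply Rmult_le_pos; [lra|].
  apply RInt_ge_0; [lra | now apply ex_RInt_mass_integrand |].
  intros y hy; apply Rmult_le_pos; [apply pow_le; lra|].
  apply Rlt_le, rho_pos; [lra | apply (lt_Rg_of_le s); [exact hsR | lra]].
Qed.

Lemma is_derive_neg_ln_rho (x : R) : 0 < x -> Rbar_lt x Rg ->
  is_derive (fun s => - ln (rho s)) x (Rpower (rho x) (2 - gamma) / gamma * mass_ratio x).
Proof.
  intros hx hxR; pose proof (rho_pos x (Rlt_le _ _ hx) hxR) as hrho.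
  pose proof (is_derive_opp _ _ _ (is_derive_ln_of_Rpower rho gamma x _
    (Rgt_not_eq _ _ gamma_pos) (rho_equation x hx hxR))) as hD.
  replace (Rpower (rho x) (2 - gamma) / gamma * mass_ratio x)
    with (opp (- rho x * LE_mass d rho x / x ^ (d - 1) / (gamma * Rpower (rho x) gamma)));
    [exact hD|].
  assert (0 < Rpower (rho x) gamma) by apply exp_pos.
  assert (hsplit : Rpower (rho x) (2 - gamma) = rho x * rho x / Rpower (rho x) gamma).
  { replace (rho x * rho x) with (Rpower (rho x) (gamma + (2 - gamma)))
      by (replace (gamma + (2 - gamma)) with (1 + 1) by ring;
          now rewrite Rpower_plus, Rpower_1).
    rewrite Rpower_plus; field; lra. }
  assert (0 < x ^ (d - 1)) by (apply pow_lt; lra).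
  unfold opp, mass_ratio; simpl; rewrite hsplit; field; lra.
Qed.

Lemma mass_ratio_nonneg (x : R) : 0 < x -> Rbar_lt x Rg -> 0 <= mass_ratio x.
Proof.
  intros hx hxR; pose proof (rho_pos x (Rlt_le _ _ hx) hxR).
  assert (0 < x ^ (d - 1)) by (apply pow_lt; lra).
  apply Rdiv_le_0_compat; [now apply LE_mass_nonneg; [lra|] | apply Rmult_lt_0_compat; lra].
Qed.

Lemma rho_nonincreasing (y s : R) : 0 < y -> y <= s -> Rbar_lt s Rg -> rho s <= rho y.
Proof.
  intros hy hys hsR.
  assert (hR : forall t, t <= s -> Rbar_lt t Rg) by (intros; now apply (lt_Rg_of_le s)).
  apply ln_le_cancel; [apply rho_pos; [lra | exact hsR] | apply rho_pos; [lra | apply hR; lra] |].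
  enough (- ln (rho y) <= - ln (rho s)) by lra.
  apply (nondecreasing_of_is_derive_nonneg (fun t => - ln (rho t))
    (fun x => Rpower (rho x) (2 - gamma) / gamma * mass_ratio x));
    [exact hys | | |].
  - intros x hx; apply (ex_derive_continuous (fun t => - ln (rho t))).
    eexists; apply is_derive_neg_ln_rho; [lra | apply hR; lra].
  - intros x hx; apply is_derive_neg_ln_rho; [lra | apply hR; lra].
  - intros x hx; apply Rmult_le_pos; [apply Rlt_le, Rdiv_lt_0_compat; [apply exp_pos | lra]|].
    apply mass_ratio_nonneg; [lra | apply hR; lra].
Qed.

Lemma LE_mass_ge (x : R) : 0 < x -> Rbar_lt x Rg ->
  4 * PI * (rho x * x ^ d / INR d) <= LE_mass d rho x.
Proof.
  intros hx hxR; unfold LE_mass; pose proof PI_RGT_0.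
  apply Rmult_le_compat_l; [lra|].
  assert (hI : is_RInt (fun y => rho x * y ^ (d - 1)) 0 x (rho x * x ^ d / INR d)).
  { pose proof (is_RInt_pow 0 x (d - 1)) as hpow.
    replace (S (d - 1)) with d in hpow by lia; rewrite pow_i in hpow by lia.
    replace (rho x * x ^ d / INR d) with (scal (rho x) (x ^ d / INR d - 0 / INR d))
      by (unfold scal; simpl; unfold mult; simpl; field; apply not_0_INR; lia).
    exact (is_RInt_scal _ _ _ _ _ hpow). }
  rewrite <- (is_RInt_unique _ _ _ _ hI).
  apply RInt_le; [lra | now exists (rho x * x ^ d / INR d) |
    apply ex_RInt_mass_integrand; [lra | exact hxR] |].
  intros y hy; rewrite Rmult_comm; apply Rmult_le_compat_l; [apply pow_le; lra|].
  apply rho_nonincreasing; [lra | lra | exact hxR].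
Qed.

Lemma mass_ratio_ge (x : R) : 0 < x -> Rbar_lt x Rg -> 4 * PI * x / INR d <= mass_ratio x.
Proof.
  intros hx hxR; pose proof (rho_pos x (Rlt_le _ _ hx) hxR).
  assert (0 < x ^ (d - 1)) by (apply pow_lt; lra).
  assert (0 < INR d) by (apply lt_0_INR; lia).
  assert (hxd : x ^ d = x * x ^ (d - 1)) by (replace d with (S (d - 1)) at 1 by lia; reflexivity).
  pose proof (LE_mass_ge x hx hxR) as hm; rewrite hxd in hm.
  apply (Rmult_le_reg_r (rho x * x ^ (d - 1))); [apply Rmult_lt_0_compat; lra|].
  replace (mass_ratio x * (rho x * x ^ (d - 1))) with (LE_mass d rho x)
    by (unfold mass_ratio; field; lra).
  replace (4 * PI * x / INR d * (rho x * x ^ (d - 1)))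
    with (4 * PI * (rho x * (x * x ^ (d - 1)) / INR d)) by (field; lra).
  exact hm.
Qed.

Lemma growth_from_center (Phi dPhi : R -> R) (c r : R) : 0 <= r -> Rbar_lt r Rg ->
  (forall u, 0 < u -> continuous Phi u) ->
  (forall x, 0 < x < r -> is_derive (fun s => Phi (rho s)) x (dPhi x)) ->
  (forall x, 0 < x < r -> 2 * c * x <= dPhi x) ->
  Phi (rho 0) + c * r ^ 2 <= Phi (rho r).
Proof.
  intros hr hrR hPhi hd hge.
  assert (hR : forall t, t <= r -> Rbar_lt t Rg) by (intros; now apply (lt_Rg_of_le r)).
  set (F := fun x => Phi (rho (Rmax 0 x)) - c * x ^ 2).
  enough (hF : F 0 <= F r).
  { unfold F in hF; rewrite Rmax_left, Rmax_right in hF by lra; simpl in hF; lra. }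
  apply (nondecreasing_of_is_derive_nonneg F (fun x => dPhi x - c * (2 * x))); [exact hr | | |].
  - intros x hx.
    apply (continuous_minus (V := R_NormedModule) (fun x => Phi (rho (Rmax 0 x))) (fun x => c * x ^ 2)).
    + apply (continuous_comp (fun x => rho (Rmax 0 x)) Phi).
      * apply continuous_rho_Rmax, hR; lra.
      * apply hPhi, rho_pos; [apply Rmax_l | apply hR, Rmax_lub; lra].
    + apply (ex_derive_continuous (fun x : R => c * x ^ 2)); auto_derive; easy.
  - intros x hx; apply (is_derive_ext_loc (fun s => Phi (rho s) - c * s ^ 2)).
    + apply (filter_imp (fun u => 0 < u)); [|now apply open_gt].
      intros u hu; unfold F; now rewrite Rmax_right by lra.
    + apply (is_derive_minus (fun s => Phi (rho s)) (fun s => c * s ^ 2)); [now apply hd|].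
      auto_derive; [easy | ring].
  - intros x hx; specialize (hge x hx); lra.
Qed.

Lemma Rpower_rho_growth (r : R) : gamma < 2 -> 0 <= r -> Rbar_lt r Rg ->
  Rpower (rho 0) (- (2 - gamma)) + 2 * PI / INR d * ((2 - gamma) / gamma) * r ^ 2
    <= Rpower (rho r) (- (2 - gamma)).
Proof.
  intros hg hr hrR; assert (0 < INR d) by (apply lt_0_INR; lia).
  apply (growth_from_center (fun u => Rpower u (- (2 - gamma)))
    (fun x => (2 - gamma) / gamma * mass_ratio x)); [exact hr | exact hrR | | |].
  - intros u hu; apply (ex_derive_continuous (fun u => Rpower u (- (2 - gamma)))).
    unfold Rpower; auto_derive; exact hu.
  - intros x hx; assert (hxR : Rbar_lt x Rg) by (apply (lt_Rg_of_le r); [exact hrR | lra]).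
    assert (hinv : Rpower (rho x) (2 - gamma) * Rpower (rho x) (- (2 - gamma)) = 1).
    { rewrite <- Rpower_plus, Rplus_opp_r; apply Rpower_O, rho_pos; [lra | exact hxR]. }
    apply (is_derive_ext (fun s => exp ((2 - gamma) * - ln (rho s)))).
    { intros s; unfold Rpower; f_equal; ring. }
    replace ((2 - gamma) / gamma * mass_ratio x) with
      (scal ((2 - gamma) * (Rpower (rho x) (2 - gamma) / gamma * mass_ratio x))
            (Rpower (rho x) (- (2 - gamma)))).
    + change (Rpower (rho x) (- (2 - gamma))) with (exp (- (2 - gamma) * ln (rho x))).
      replace (- (2 - gamma) * ln (rho x)) with ((2 - gamma) * - ln (rho x)) by ring.
      apply (is_derive_comp exp (fun s => (2 - gamma) * - ln (rho s))); [apply is_derive_exp|].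
      apply is_derive_scal, is_derive_neg_ln_rho; [lra | exact hxR].
    + unfold scal; simpl; unfold mult; simpl.
      replace (_ * _ * _) with ((2 - gamma) / gamma * mass_ratio x *
        (Rpower (rho x) (2 - gamma) * Rpower (rho x) (- (2 - gamma)))) by (field; lra).
      rewrite hinv; ring.
  - intros x hx; assert (hxR : Rbar_lt x Rg) by (apply (lt_Rg_of_le r); [exact hrR | lra]).
    replace (2 * (2 * PI / INR d * ((2 - gamma) / gamma)) * x)
      with ((2 - gamma) / gamma * (4 * PI * x / INR d)) by (field; lra).
    apply Rmult_le_compat_l; [apply Rlt_le, Rdiv_lt_0_compat; lra|].
    apply mass_ratio_ge; [lra | exact hxR].
Qed.

Lemma ln_rho_decay (r : R) : gamma = 2 -> 0 <= r -> Rbar_lt r Rg ->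
  - ln (rho 0) + 2 * PI / INR d * (1 / gamma) * r ^ 2 <= - ln (rho r).
Proof.
  intros hg hr hrR; assert (0 < INR d) by (apply lt_0_INR; lia).
  apply (growth_from_center (fun u => - ln u) (fun x => 1 / gamma * mass_ratio x));
    [exact hr | exact hrR | | |].
  - intros u hu; apply (ex_derive_continuous (fun u => - ln u)); auto_derive; exact hu.
  - intros x hx; assert (hxR : Rbar_lt x Rg) by (apply (lt_Rg_of_le r); [exact hrR | lra]).
    replace (1 / gamma * mass_ratio x) with (Rpower (rho x) (2 - gamma) / gamma * mass_ratio x)
      by (rewrite hg, Rminus_diag, Rpower_O by (apply rho_pos; [lra | exact hxR]); field; lra).
    apply is_derive_neg_ln_rho; [lra | exact hxR].
  - intros x hx; assert (hxR : Rbar_lt x Rg) by (apply (lt_Rg_of_le r); [exact hrR | lra]).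
    replace (2 * (2 * PI / INR d * (1 / gamma)) * x)
      with (1 / gamma * (4 * PI * x / INR d)) by (field; lra).
    apply Rmult_le_compat_l; [apply Rlt_le, Rdiv_lt_0_compat; lra|].
    apply mass_ratio_ge; [lra | exact hxR].
Qed.

End LaneEmdenSolution.

Theorem mainTheorem6 (d : nat) (gamma rho0 : R) (Rg : Rbar) (rho : R -> R) :
  (3 <= d)%nat -> 1 <= gamma <= 2 -> 0 < rho0 ->
  LE_profile d gamma rho0 Rg rho ->
  forall r, 0 <= r -> Rbar_lt (Finite r) Rg ->
    (gamma < 2 ->
       rho r <= Rpower (Rpower rho0 (- (2 - gamma))
                        + 2 * PI / INR d * ((2 - gamma) / gamma) * r ^ 2)
                       (- (1 / (2 - gamma)))) /\
    (gamma = 2 ->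
       rho r <= exp (ln rho0 - 2 * PI / INR d * (1 / gamma) * r ^ 2)).
Proof.
  intros hd hgamma hrho0 [[_ [<- [hpos [hcont0 [hcont heq]]]]] _] r hr hrR.
  assert (hd1 : (1 <= d)%nat) by lia.
  assert (hgamma0 : 0 < gamma) by lra.
  pose proof (hpos r hr hrR) as hrho_r.
  split; intros hg.
  - apply le_Rpower_of_Rpower_opp_ge; [exact hrho_r | | lra |].
    + assert (0 < INR d) by (apply lt_0_INR; lia); pose proof PI_RGT_0.
      apply Rplus_lt_le_0_compat; [apply exp_pos|].
      apply Rmult_le_pos; [|apply pow2_ge_0].
      apply Rmult_le_pos; apply Rlt_le, Rdiv_lt_0_compat; lra.
    + exact (Rpower_rho_growth d gamma Rg rho hd1 hgamma0 hpos hcont0 hcont heq r hg hr hrR).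
  - pose proof (ln_rho_decay d gamma Rg rho hd1 hgamma0 hpos hcont0 hcont heq r hg hr hrR).
    apply ln_le_cancel; [exact hrho_r | apply exp_pos |].
    rewrite ln_exp; lra.
Qed.
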